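(* Given a finite hypergraph $H=(X,E)$, one can construct a set of points $P=\{p_e : e\in E\}$ in the plane (in convex position) and a family of convex polygons $\mathcal{R}=\{R_v: v\in X\}$ (possibly degenerate, each the convex hull of a subset of $P$) such that for every $e\in E$ and $v\in X$, $p_e\in R_v$ if and only if $v\in e$. Consequently, for every set $X'\subseteq X$ of $k$ vertices, the number of hyperedges $e\subseteq X'$ equals the number of points of $P$ exposed after deleting $\{R_v:v\in X'\}$ from $\mathcal{R}$, so a densest $k$-subhypergraph of $H$ corresponds to an optimal solution of max-exposure on $(P,\mathcal{R},k)$.
   Context: A point $p\in P$ is exposed with respect to a family of ranges $\mathcal{R}'$ if it lies in no range of $\mathcal{R}'$. Max-exposure: given $P$, $\mathcal{R}$ and $k$, delete $k$ ranges from $\mathcal{R}$ so as to maximize the number of exposed points. Densest $k$-subhypergraph: given a hypergraph $H=(X,E)$, find $k$ vertices maximizing the number of hyperedges entirely contained in them. *)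

From HB Require Import structures.
From mathcomp Require Import all_boot all_order all_algebra.
From mathcomp Require Import boolp reals.
Set Implicit Arguments. Unset Strict Implicit. Unset Printing Implicit Defensive.
Import Order.TTheory GRing.Theory Num.Theory.
Local Open Scope ring_scope.

Notation pt R := 'rV[R]_2.

Definition in_hull (R : realType) (T : finType) (A : {set T}) (q : T -> pt R)
    (x : pt R) : Prop :=
  exists w : T -> R,
    [/\ forall t, 0 <= w t,
        forall t, t \notin A -> w t = 0,
        \sum_(t in A) w t = 1
      & x = \sum_(t in A) w t *: q t].

Definition convex_position (R : realType) (T : finType) (E : {set T})
    (q : T -> pt R) : Prop :=
  forall e, e \in E -> ~ in_hull (E :\ e) q (q e).

Definition induced_edges (X : finType) (E : {set {set X}}) (X' : {set X}) : nat :=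
  #|[set e in E | e \subset X']|.

(* Max-exposure instance: points P = {q e : e in E}, ranges R_v = conv{q e : e in S v}. *)
Definition exposed_count (R : realType) (X : finType) (E : {set {set X}})
    (q : {set X} -> pt R) (S : X -> {set {set X}}) (X' : {set X}) : nat :=
  #|[set e in E | `[< forall v, v \notin X' -> ~ in_hull (S v) q (q e) >]]|.

From HB Require Import structures.
From mathcomp Require Import all_boot all_order all_algebra.
From mathcomp Require Import boolp reals.
From mathcomp Require Import ring.
Set Implicit Arguments. Unset Strict Implicit. Unset Printing Implicit Defensive.
Import Order.TTheory GRing.Theory Num.Theory.
Local Open Scope ring_scope.

(* Put the hyperedges on the parabola y = x^2 at distinct abscissae and let
   R_v be the convex hull of the hyperedges containing v.  A point (x, x^2)
   that is a convex combination of parabola points (s_t, s_t^2) satisfies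
   E[s] = x and E[s^2] = x^2, so the variance E[(s - x)^2] vanishes and every
   point with positive weight is (x, x^2) itself.  Hence p_e lies in R_v iff
   v is in e, the points are in convex position, and the hyperedges inside X'
   are exactly the points missed by the ranges R_v, v outside X'. *)

Section ParabolaHull.
Variables (R : realType) (T : finType).

Definition parabola (x : R) : pt R := \row_(i < 2) x ^+ i.+1.

Lemma mem_in_hull (A : {set T}) (q : T -> pt R) e : e \in A -> in_hull A q (q e).
Proof.
move=> eA; exists (fun t => (t == e)%:R); split.
- by move=> t; case: (t == e).
- by move=> t; apply: contraNeq => /eqP; case: eqP => // ->.
- by rewrite (bigD1 e) //= eqxx big1 ?addr0 // => t /andP[_ /negbTE ->].
- rewrite (bigD1 e) //= eqxx scale1r big1 ?addr0 // => t /andP[_ /negbTE ->].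
  by rewrite scale0r.
Qed.

Lemma mean_sqr_eq_exists_eq (A : {set T}) (w s : T -> R) (x : R) :
    (forall t, 0 <= w t) -> \sum_(t in A) w t = 1 ->
    \sum_(t in A) w t * s t = x -> \sum_(t in A) w t * s t ^+ 2 = x ^+ 2 ->
  exists2 t, t \in A & s t = x.
Proof.
move=> w_ge0 w_sum1 mean_s mean_s2.
have variance0 : \sum_(t in A) w t * (s t - x) ^+ 2 = 0.
  have -> : \sum_(t in A) w t * (s t - x) ^+ 2 =
      \sum_(t in A) w t * s t ^+ 2 - 2%:R * x * \sum_(t in A) w t * s t
      + x ^+ 2 * \sum_(t in A) w t.
    rewrite !mulr_sumr -sumrN -!big_split /=; apply: eq_bigr => t _; ring.
  by rewrite mean_s mean_s2 w_sum1; ring.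
have [t tA wt_neq0] : exists2 t, t \in A & w t != 0.
  apply/exists_inP; apply: contraTT (oner_neq0 R) => /exists_inPn w0.
  by rewrite -w_sum1 big1 ?eqxx // => t /w0 /negPn /eqP.
exists t => //; apply/eqP; rewrite -subr_eq0 -sqrf_eq0.
move/eqP: variance0; rewrite psumr_eq0 => [/allP/(_ t (mem_index_enum t))|u _].
  by rewrite tA mulf_eq0 (negbTE wt_neq0).
by rewrite mulr_ge0 ?sqr_ge0.
Qed.

Lemma in_hull_parabolaP (A : {set T}) (s : T -> R) (x : R) :
  in_hull A (parabola \o s) (parabola x) <-> exists2 t, t \in A & s t = x.
Proof.
split=> [[w [w_ge0 _ w_sum1 hull_x]] | [t tA <-]]; last exact: mem_in_hull.
have moment (j : 'I_2) : \sum_(t in A) w t * s t ^+ j.+1 = x ^+ j.+1.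
  have := congr1 (fun M : pt R => M 0 j) hull_x; rewrite /= summxE !mxE => ->.
  by apply: eq_bigr => t _; rewrite !mxE.
apply: (mean_sqr_eq_exists_eq w_ge0 w_sum1).
  by have := moment ord0; rewrite expr1; under eq_bigr do rewrite expr1.
exact: (moment (lift ord0 ord0)).
Qed.

Lemma in_hull_parabola_inj (A : {set T}) (s : T -> R) e :
  injective s -> in_hull A (parabola \o s) (parabola (s e)) <-> e \in A.
Proof.
move=> s_inj; rewrite in_hull_parabolaP.
by split=> [[t tA /s_inj <-] | eA]; last exists e.
Qed.

Lemma parabola_inj : injective parabola.
Proof. by move=> x y /(congr1 (fun M : pt R => M 0 0)); rewrite !mxE !expr1. Qed.

End ParabolaHull.

Lemma natr_enum_rank_inj (R : realType) (T : finType) :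
  injective (fun t : T => (enum_rank t : nat)%:R : R).
Proof. by move=> a b /eqP; rewrite eqr_nat => /eqP/val_inj/enum_rank_inj. Qed.

Lemma induced_edges_exposed_count (R : realType) (X : finType)
    (E : {set {set X}}) (q : {set X} -> pt R) (S : X -> {set {set X}}) :
    (forall e v, e \in E -> (in_hull (S v) q (q e) <-> v \in e)) ->
  forall X' : {set X}, induced_edges E X' = exposed_count E q S X'.
Proof.
move=> incidence X'; apply: eq_card => e; rewrite !inE.
case eE: (e \in E) => //=; apply/subsetP/asboolP.
  by move=> eX' v vX' /(incidence e v eE) /eX'; apply/negP.
move=> exposed v ve; apply/negPn/negP => vX'.
by apply: (exposed v vX'); apply/(incidence e v eE).
Qed.

Theorem mainTheorem5 (R : realType) (X : finType) (E : {set {set X}}) :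
  exists (q : {set X} -> 'rV[R]_2) (S : X -> {set {set X}}),
   (
    [/\ {in E &, injective q},
        convex_position E q,
        (forall v, S v \subset E),
        (forall e v, e \in E -> (in_hull (S v) q (q e) <-> v \in e))
      & (forall X' : {set X}, induced_edges E X' = exposed_count E q S X')] /\
      (forall (k : nat) (X' : {set X}), #|X'| = k ->
          ((forall Y : {set X}, #|Y| = k -> (induced_edges E Y <= induced_edges E X')%N)
           <->
           (forall Y : {set X}, #|Y| = k -> (exposed_count E q S Y <= exposed_count E q S X')%N)))).
Proof.
pose s (e : {set X}) : R := (enum_rank e : nat)%:R.
have s_inj : injective s := @natr_enum_rank_inj R _.
pose q := @parabola R \o s; pose S v := [set e in E | v \in e].
have incidence e v : e \in E -> in_hull (S v) q (q e) <-> v \in e.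
  move=> eE; apply: iff_trans (in_hull_parabola_inj (S v) e s_inj) _.
  by rewrite inE eE.
have edges_exposed := induced_edges_exposed_count incidence.
exists q, S; split; first split=> //.
- by move=> a b _ _ /parabola_inj /s_inj.
- by move=> e _ /(in_hull_parabola_inj _ _ s_inj); rewrite !inE eqxx.
- by move=> v; apply/subsetP => e; rewrite inE => /andP[].
by move=> k X' _; split=> opt Y /opt; rewrite !edges_exposed.
Qed.
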